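(* Let $\mathscr{A}$ be a finite $\sigma$-structure and $k>0$. There is a bijective correspondence between $\mathbb{E}_k$-coalgebras $\alpha:\mathscr{A}\to\mathbb{E}_k\mathscr{A}$ and forest covers of the Gaifman graph $\mathcal{G}(\mathscr{A})$ of height $\le k$ (with universe $A$); under it, $\alpha$ corresponds to the order $a\le a'$ iff $\alpha(a)\sqsubseteq\alpha(a')$, and a forest cover corresponds to the map sending $a$ to the chain $[a_1,\dots,a_j]$ of its predecessors $a_1<\dots<a_j=a$.
   Context: $\mathbb{E}_k\mathscr{A}$: universe $A^{\le k}$ (non-empty sequences over $A$ of length $\le k$, ordered by prefix $\sqsubseteq$); $R(s_1,\dots,s_n)$ iff the $s_i$ are pairwise $\sqsubseteq$-comparable and $R^{\mathscr{A}}(\varepsilon s_1,\dots,\varepsilon s_n)$, where $\varepsilon[a_1,\dots,a_j]=a_j$. Comultiplication $\delta_{\mathscr{A}}[a_1,\dots,a_j]=[[a_1],[a_1,a_2],\dots,[a_1,\dots,a_j]]$; functor action on a homomorphism $h$: $\mathbb{E}_k h[a_1,\dots,a_j]=[h(a_1),\dots,h(a_j)]$. An $\mathbb{E}_k$-coalgebra on $\mathscr{A}$ is a homomorphism $\alpha:\mathscr{A}\to\mathbb{E}_k\mathscr{A}$ with $\delta_{\mathscr{A}}\circ\alpha=\mathbb{E}_k\alpha\circ\alpha$ and $\varepsilon_{\mathscr{A}}\circ\alpha=\mathrm{id}_A$. The Gaifman graph $\mathcal{G}(\mathscr{A})=(A,\frown)$: $a\frown a'$ iff $a\neq a'$ and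 both occur in some tuple of some relation $R^{\mathscr{A}}$. A forest is a poset in which the set of predecessors of each element is a finite chain; its height is the maximum size of a chain. A forest cover of a graph $(V,\frown)$ is a forest order $\le$ on $V$ such that $v\frown v'$ implies $v\le v'$ or $v'\le v$. *)

From mathcomp Require Import all_boot.
Set Implicit Arguments. Unset Strict Implicit. Unset Printing Implicit Defensive.

Section Defs.
Variables (Sym : Type) (ar : Sym -> nat) (A : finType)
          (interp : forall s : Sym, pred ((ar s).-tuple A)).

Definition pfx (s t : seq A) : bool := prefix s t.
Definition pfx_comparable (s t : seq A) : bool := pfx s t || pfx t s.

(* universe of E_k A : non-empty sequences of length <= k *)
Definition inEk (k : nat) (s : seq A) : bool := (0 < size s) && (size s <= k).

(* counit epsilon : last element (None on the empty sequence, which is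
   not in the universe of E_k A) *)
Definition eps (s : seq A) : option A :=
  if s is x :: s' then Some (last x s') else None.

Definition delta (s : seq A) : seq (seq A) := [seq take i s | i <- iota 1 (size s)].

Definition EkRel (s : Sym) (t : (ar s).-tuple (seq A)) : Prop :=
  pairwise pfx_comparable t /\
  exists t' : (ar s).-tuple A, map eps t = map Some t' /\ interp t'.

Definition Ek_coalgebra (k : nat) (alpha : A -> seq A) : Prop :=
  (forall a, inEk k (alpha a)) /\
  (forall (s : Sym) (t : (ar s).-tuple A), interp t -> EkRel (map_tuple alpha t)) /\
  (forall a, delta (alpha a) = map alpha (alpha a)) /\
  (forall a, eps (alpha a) = Some a).

Definition gaifman (a a' : A) : Prop :=
  a <> a' /\ exists (s : Sym) (t : (ar s).-tuple A), interp t /\ a \in t /\ a' \in t.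

Definition is_partial_order (le : rel A) : Prop :=
  reflexive le /\ antisymmetric le /\ transitive le.

Definition comparable (le : rel A) (x y : A) : bool := le x y || le y x.

Definition is_forest (le : rel A) : Prop :=
  is_partial_order le /\
  (* the predecessors of each element form a chain (finite since A is) *)
  (forall a b c, le b a -> le c a -> comparable le b c).

Definition height_le (le : rel A) (k : nat) : Prop :=
  forall C : {set A}, {in C &, forall x y, comparable le x y} -> #|C| <= k.

Definition forest_cover_le (k : nat) (le : rel A) : Prop :=
  is_forest le /\ height_le le k /\
  (forall a a', gaifman a a' -> comparable le a a').

Definition order_of_coalg (alpha : A -> seq A) : rel A :=
  fun a a' => pfx (alpha a) (alpha a').

Definition coalg_of_order (le : rel A) (a : A) : seq A :=
  sort le [seq b <- enum A | le b a].

End Defs.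

From Pilot Require Import Defs.
From mathcomp Require Import all_boot.
Set Implicit Arguments. Unset Strict Implicit. Unset Printing Implicit Defensive.

(* A coalgebra map alpha sends a to a chain alpha a ending in a (counit law)
   whose i-th entry b satisfies alpha b = take i.+1 (alpha a) (comultiplication
   law).  Hence alpha b is a prefix of alpha a exactly when b occurs in alpha a,
   and the prefix order pulled back along alpha is a forest whose chains have
   length at most k; the homomorphism condition says precisely that related
   elements get comparable chains.  Conversely, the sorted list of predecessors
   in a forest satisfies both laws because the predecessors of a predecessor b
   of a form an initial segment of those of a. *)

Section Prefix.
Variable T : eqType.
Implicit Types s t u : seq T.

Lemma prefix_size_eq s t : prefix s t -> size s = size t -> s = t.
Proof. by rewrite prefixE => /eqP E hs; rewrite -E hs take_size. Qed.

Lemma prefix_comparable s t u : prefix s u -> prefix t u -> prefix s t || prefix t s.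
Proof.
rewrite [prefix s u]prefixE [prefix t u]prefixE => /eqP <- /eqP <-.
case: (leqP (size s) (size t)) => [st | /ltnW ts].
  by rewrite -{1}(take_takel u st) prefix_take.
by rewrite -{2}(take_takel u ts) prefix_take orbT.
Qed.

End Prefix.

Section Sequences.
Variable A : finType.
Implicit Types (s t : seq A) (f : A -> seq A).

Lemma eps_rcons s a : eps (rcons s a) = Some a.
Proof. by case: s => //= x s; rewrite last_rcons. Qed.

Lemma mem_eps s a : eps s = Some a -> a \in s.
Proof. by case: s => //= x s [<-]; rewrite mem_last. Qed.

Lemma pfx_comparable_refl : reflexive (@pfx_comparable A).
Proof. by move=> s; rewrite /pfx_comparable /pfx prefix_refl. Qed.

Lemma pfx_comparable_sym : symmetric (@pfx_comparable A).
Proof. by move=> s t; rewrite /pfx_comparable orbC. Qed.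

Lemma pairwise_pfx_comparable_map f t :
  pairwise (@pfx_comparable A) (map f t) =
  all2rel (fun x y => pfx_comparable (f x) (f y)) t.
Proof.
rewrite pairwise_map pairwise_all2rel // => [x | x y].
  exact: pfx_comparable_refl.
exact: pfx_comparable_sym.
Qed.

Lemma delta_eq_map s f x0 :
  delta s = map f s <-> forall i, i < size s -> f (nth x0 s i) = take i.+1 s.
Proof.
have nth_delta i : i < size s -> nth [::] (delta s) i = take i.+1 s.
  by move=> hi; rewrite (nth_map 0) ?size_iota // nth_iota.
split=> [E i hi | H].
  by rewrite -nth_delta // E (nth_map x0).
apply: (@eq_from_nth _ [::]) => [|i]; first by rewrite !size_map size_iota.
by rewrite size_map size_iota => hi; rewrite nth_delta // (nth_map x0) // H.
Qed.

End Sequences.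

Section ForestToCoalgebra.
Variables (A : finType) (le : rel A).
Hypothesis forest : is_forest le.

Let le_refl : reflexive le := proj1 (proj1 forest).
Let le_anti : antisymmetric le := proj1 (proj2 (proj1 forest)).
Let le_trans : transitive le := proj2 (proj2 (proj1 forest)).
Let le_chain : forall a b c, le b a -> le c a -> Defs.comparable le b c := proj2 forest.

Local Notation preds := (coalg_of_order le).

Lemma mem_coalg_of_order a b : (b \in preds a) = le b a.
Proof. by rewrite mem_sort mem_filter mem_enum andbT. Qed.

Lemma uniq_coalg_of_order a : uniq (preds a).
Proof. by rewrite sort_uniq filter_uniq // enum_uniq. Qed.

Lemma pairwise_coalg_of_order a : pairwise le (preds a).
Proof.
rewrite -sorted_pairwise //.
apply: (sort_sorted_in (P := le^~ a)); last exact: filter_all.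
by move=> x y; apply: le_chain.
Qed.

Lemma coalg_of_order_unique a s :
  uniq s -> pairwise le s -> s =i le^~ a -> s = preds a.
Proof.
move=> us ps ms; apply: (pairwise_eq le_anti ps (pairwise_coalg_of_order a)).
apply: uniq_perm => // [|b]; first exact: uniq_coalg_of_order.
by rewrite ms mem_coalg_of_order.
Qed.

Lemma coalg_of_order_cat x y :
  le x y -> preds y = preds x ++ [seq b <- preds y | ~~ le b x].
Proof.
move=> lxy; have py := pairwise_coalg_of_order y.
have -> : preds x = [seq b <- preds y | le b x].
  symmetry; apply: coalg_of_order_unique; last 2 first.
  - exact: pairwise_filter.
  - by move=> b; rewrite mem_filter mem_coalg_of_order andb_idr // => /le_trans->.
  by rewrite filter_uniq // uniq_coalg_of_order.
apply: (pairwise_eq le_anti py); last by rewrite perm_sym perm_filterC.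
rewrite pairwise_cat !(pairwise_filter _ py) !andbT.
apply/allrelP => b c; rewrite !mem_filter !mem_coalg_of_order.
move=> /andP[bx yb] /andP[cx yc].
by case/orP: (le_chain yb yc) => // cb; rewrite (le_trans cb bx) in cx.
Qed.

Lemma prefix_coalg_of_order x y : prefix (preds x) (preds y) = le x y.
Proof.
apply/idP/idP => [/prefixP[s E] | lxy].
  by rewrite -mem_coalg_of_order E mem_cat mem_coalg_of_order le_refl.
by rewrite (coalg_of_order_cat lxy) prefix_prefix.
Qed.

Lemma comparable_coalg_of_order x y :
  pfx_comparable (preds x) (preds y) = Defs.comparable le x y.
Proof. by rewrite /pfx_comparable /pfx !prefix_coalg_of_order. Qed.

Lemma coalg_of_order_rcons a : exists2 s, preds a = rcons s a & a \notin s.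
Proof.
have := mem_coalg_of_order a a; rewrite le_refl.
have := pairwise_coalg_of_order a; have := uniq_coalg_of_order a.
have := mem_coalg_of_order a.
case/lastP: (preds a) => [|s z] // Mz; rewrite rcons_uniq pairwise_rcons.
move=> /andP[zs _] /andP[/allP below _]; rewrite mem_rcons in_cons => a_in.
have za : z = a.
  apply: le_anti; rewrite -Mz mem_rcons mem_head /=.
  by case/orP: a_in => [/eqP-> | /below].
by exists s; rewrite -za.
Qed.

Lemma eps_coalg_of_order a : eps (preds a) = Some a.
Proof. by have [s -> _] := coalg_of_order_rcons a; rewrite eps_rcons. Qed.

Lemma size_coalg_of_order a : (index a (preds a)).+1 = size (preds a).
Proof.
have [s -> a_notin] := coalg_of_order_rcons a.
by rewrite -cats1 index_cat (negbTE a_notin) /= eqxx addn0 size_cat addn1.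
Qed.

Lemma delta_coalg_of_order a : delta (preds a) = map preds (preds a).
Proof.
apply/(delta_eq_map _ _ a) => i hi; set b := nth a (preds a) i.
have lba : le b a by rewrite -mem_coalg_of_order mem_nth.
have := index_uniq a hi (uniq_coalg_of_order a).
rewrite -/b (coalg_of_order_cat lba) index_cat mem_coalg_of_order le_refl => <-.
by rewrite size_coalg_of_order take_size_cat.
Qed.

Lemma inEk_coalg_of_order k a : height_le le k -> inEk k (preds a).
Proof.
move=> hk; apply/andP; split; first by rewrite -size_coalg_of_order.
have := hk [set x in preds a]; rewrite cardsE (card_uniqP (uniq_coalg_of_order a)).
apply=> x y; rewrite !inE !mem_coalg_of_order; exact: le_chain.
Qed.

End ForestToCoalgebra.

Section CoalgebraToForest.
Variables (A : finType) (alpha : A -> seq A).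
Hypotheses (alpha_delta : forall a, delta (alpha a) = map alpha (alpha a))
  (alpha_eps : forall a, eps (alpha a) = Some a).

Local Notation le := (order_of_coalg alpha).

Lemma coalg_nth a i :
  i < size (alpha a) -> alpha (nth a (alpha a) i) = take i.+1 (alpha a).
Proof. by move: (alpha_delta a) => /(delta_eq_map _ _ a); apply. Qed.

Lemma coalg_inj : injective alpha.
Proof. by move=> x y E; have := alpha_eps x; rewrite E alpha_eps => -[]. Qed.

Lemma order_of_coalg_anti : antisymmetric le.
Proof.
move=> x y /andP[xy yx]; apply/coalg_inj/(prefix_size_eq xy)/eqP.
by rewrite eqn_leq !size_prefix.
Qed.

Lemma forest_order_of_coalg : is_forest le.
Proof.
split; last by move=> a b c; apply: prefix_comparable.
split; first by move=> x; apply: prefix_refl.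
by split; [exact: order_of_coalg_anti | move=> y x z; apply: prefix_trans].
Qed.

Lemma mem_coalg a b : (b \in alpha a) = le b a.
Proof.
apply/idP/idP => [/(nthP a)[i hi <-] | /prefixP[s ->]].
  by rewrite /order_of_coalg /pfx coalg_nth // prefix_take.
by rewrite mem_cat mem_eps.
Qed.

Lemma uniq_coalg a : uniq (alpha a).
Proof.
apply/(uniqP a) => i j hi hj /(congr1 (size \o alpha)) /=.
by rewrite !coalg_nth // !size_takel // => -[].
Qed.

Lemma pairwise_coalg a : pairwise le (alpha a).
Proof.
apply/(pairwiseP a) => i j hi hj lt_ij.
rewrite /order_of_coalg /pfx !coalg_nth //.
by rewrite -(take_takel (alpha a) (ltnW (lt_ij : i.+1 < j.+1))) prefix_take.
Qed.

Lemma coalg_of_order_of_coalg a : coalg_of_order le a = alpha a.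
Proof.
symmetry; apply: (coalg_of_order_unique forest_order_of_coalg).
- exact: uniq_coalg.
- exact: pairwise_coalg.
- by move=> b; rewrite mem_coalg.
Qed.

Lemma height_order_of_coalg k : (forall a, inEk k (alpha a)) -> height_le le k.
Proof.
move=> alpha_in C chainC; rewrite cardE -(size_map (size \o alpha)) -(size_iota 1 k).
apply: uniq_leq_size => [|_ /mapP[x _ ->]].
  rewrite map_inj_in_uniq ?enum_uniq // => x y; rewrite !mem_enum => xC yC E.
  apply: coalg_inj; case/orP: (chainC x y xC yC) => [xy | yx].
    exact: prefix_size_eq.
  exact/esym/(prefix_size_eq yx).
by rewrite mem_iota add1n ltnS; apply: alpha_in.
Qed.

End CoalgebraToForest.

Section Correspondence.
Variables (Sym : Type) (ar : Sym -> nat) (A : finType)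
  (interp : forall s : Sym, pred ((ar s).-tuple A)) (k : nat).

Lemma forest_cover_of_coalgebra alpha :
  Ek_coalgebra interp k alpha -> forest_cover_le interp k (order_of_coalg alpha).
Proof.
move=> [alpha_in [alpha_hom [alpha_delta alpha_eps]]].
split; first exact: forest_order_of_coalg.
split; first exact: height_order_of_coalg.
move=> x y [_ [s [t [it [xt yt]]]]].
have [/= comparable_t _] := alpha_hom s t it.
by move: comparable_t; rewrite pairwise_pfx_comparable_map => /allrelP; apply.
Qed.

Lemma coalgebra_of_forest_cover le :
  forest_cover_le interp k le -> Ek_coalgebra interp k (coalg_of_order le).
Proof.
move=> [forest [height cover]].
split; first by move=> a; apply: inEk_coalg_of_order.
split; last first.
  by split=> a; [apply: delta_coalg_of_order | apply: eps_coalg_of_order].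
move=> s t it; split; last first.
  by exists t; split=> //=; rewrite -map_comp; apply/eq_map/eps_coalg_of_order.
rewrite /= pairwise_pfx_comparable_map; apply/allrelP => x y xt yt.
rewrite comparable_coalg_of_order //.
have [->|ne] := eqVneq x y; first by rewrite /Defs.comparable (proj1 (proj1 forest)).
by apply: cover; split; [exact/eqP | exists s, t].
Qed.

End Correspondence.

Theorem mainTheorem11 (Sym : Type) (ar : Sym -> nat) (A : finType)
    (interp : forall s : Sym, pred ((ar s).-tuple A)) (k : nat) (hk : 0 < k) :
  (forall alpha : A -> seq A, Ek_coalgebra interp k alpha ->
      forest_cover_le interp k (order_of_coalg alpha)) /\
  (forall le : rel A, forest_cover_le interp k le ->
      Ek_coalgebra interp k (coalg_of_order le)) /\
  (forall alpha : A -> seq A, Ek_coalgebra interp k alpha ->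
      forall a, coalg_of_order (order_of_coalg alpha) a = alpha a) /\
  (forall le : rel A, forest_cover_le interp k le ->
      forall a a', order_of_coalg (coalg_of_order le) a a' = le a a').
Proof.
split; first exact: forest_cover_of_coalgebra.
split; first exact: coalgebra_of_forest_cover.
split=> [alpha [_ [_ [alpha_delta alpha_eps]]] a | le [forest _] a a'].
  exact: coalg_of_order_of_coalg.
exact: prefix_coalg_of_order.
Qed.
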